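(* Let $p$ be a ProbNetKAT program, $S=\mathcal{S}[\![p]\!]$ and $U$ as defined in the context. Each of the Markov chains $S$, $U$ and $SU$ (matrix product) is monotone: if $(a,b)$ can reach $(a',b')$ in $T\in\{S,U,SU\}$, i.e. $(T^n)_{(a,b),(a',b')}>0$ for some $n\ge 0$, then $b\subseteq b'$.
   Context: $\mathsf{Pk}$ is a finite set of packets; $[\varphi]$ is the Iverson bracket. For a ProbNetKAT program $p$, $\mathcal{B}[\![p]\!]\in[0,1]^{2^{\mathsf{Pk}}\times 2^{\mathsf{Pk}}}$ is its (stochastic) matrix semantics, where $\mathcal{B}[\![p]\!]_{ab}$ is the probability that $p$ outputs packet set $b$ on input packet set $a$. The small-step matrix on states $(a,b)\in 2^{\mathsf{Pk}}\times 2^{\mathsf{Pk}}$ is $S_{(a,b),(a',b')}=[b'=b\cup a]\,\mathcal{B}[\![p]\!]_{a,a'}$. A state $(a,b)$ is saturated if whenever $(a,b)$ can reach $(a',b')$ in $S$ (i.e. $(S^n)_{(a,b),(a',b')}>0$ for some $n\ge0$) we have $b'=b$. The matrix $U$ is $U_{(a,b),(a',b')}=[b'=b]\cdot[a'=\emptyset]$ if $(a,b)$ is saturated and $U_{(a,b),(a',b')}=[b'=b]\cdot[a'=a]$ otherwise. *)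

From HB Require Import structures.
From mathcomp Require Import all_boot all_order all_algebra.
From Stdlib Require Import ClassicalEpsilon.
Set Implicit Arguments. Unset Strict Implicit. Unset Printing Implicit Defensive.
Import Order.TTheory GRing.Theory Num.Theory.
Local Open Scope ring_scope.

Definition fmx (R : realFieldType) (T : finType) := T -> T -> R.

Definition fmx_mul (R : realFieldType) (T : finType) (A B : fmx R T) : fmx R T :=
  fun x y => \sum_(z : T) A x z * B z y.

Definition fmx_id (R : realFieldType) (T : finType) : fmx R T :=
  fun x y => (x == y)%:R.

Fixpoint fmx_pow (R : realFieldType) (T : finType) (A : fmx R T) (n : nat) : fmx R T :=
  match n with
  | 0 => @fmx_id R T
  | m.+1 => fmx_mul (fmx_pow A m) A
  end.

Definition reaches (R : realFieldType) (T : finType) (A : fmx R T) (s t : T) : Prop :=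
  exists n : nat, 0 < fmx_pow A n s t.

(* A stochastic matrix on packet sets 2^Pk x 2^Pk (the shape of B[[p]]). *)
Definition stochastic (R : realFieldType) (T : finType) (B : fmx R T) : Prop :=
  (forall a b, 0 <= B a b /\ B a b <= 1) /\ (forall a, \sum_(b : T) B a b = 1).

Definition state (Pk : finType) := ({set Pk} * {set Pk})%type.

Definition Smat (R : realFieldType) (Pk : finType) (B : fmx R {set Pk})
  : fmx R (state Pk) :=
  fun s t => (t.2 == s.2 :|: s.1)%:R * B s.1 t.1.

Definition saturated (R : realFieldType) (Pk : finType) (B : fmx R {set Pk})
  (s : state Pk) : Prop :=
  forall t, reaches (Smat B) s t -> t.2 = s.2.

Definition Umat (R : realFieldType) (Pk : finType) (B : fmx R {set Pk})
  : fmx R (state Pk) :=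
  fun s t =>
    if excluded_middle_informative (saturated B s)
    then ((t.2 == s.2) && (t.1 == set0))%:R
    else ((t.2 == s.2) && (t.1 == s.1))%:R.

(* Reachability in a nonnegative matrix is the reflexive-transitive closure of
   its one-step support, since a positive entry of a product of nonnegative
   matrices is witnessed by a positive path through some intermediate state.
   So a chain is monotone as soon as each single step is, and every step of S
   replaces b by b :|: a while every step of U keeps b. *)
From HB Require Import structures.
From mathcomp Require Import all_boot all_order all_algebra.
From Stdlib Require Import ClassicalEpsilon.
Import Order.TTheory GRing.Theory Num.Theory.
Set Implicit Arguments. Unset Strict Implicit.
Local Open Scope ring_scope.

Section NonnegativeMatrices.
Variables (R : realFieldType) (T : finType).

Definition fmx_nonneg (A : fmx R T) := forall x y, 0 <= A x y.

Lemma fmx_id_nonneg : fmx_nonneg (@fmx_id R T).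
Proof. by move=> x y; rewrite ler0n. Qed.

Lemma fmx_mul_nonneg (A B : fmx R T) :
  fmx_nonneg A -> fmx_nonneg B -> fmx_nonneg (fmx_mul A B).
Proof. by move=> A_ge0 B_ge0 x y; apply: sumr_ge0 => z _; apply: mulr_ge0. Qed.

Lemma fmx_pow_nonneg (A : fmx R T) n : fmx_nonneg A -> fmx_nonneg (fmx_pow A n).
Proof.
by move=> A_ge0; elim: n => [|n IHn] /=; [apply: fmx_id_nonneg | apply: fmx_mul_nonneg].
Qed.

Lemma fmx_mul_gt0 (A B : fmx R T) x y :
  fmx_nonneg A -> fmx_nonneg B ->
  0 < fmx_mul A B x y -> exists z, 0 < A x z /\ 0 < B z y.
Proof.
move=> A_ge0 B_ge0; rewrite /fmx_mul lt0r => /andP[sum_neq0 _].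
case: (pickP (fun z => A x z * B z y != 0)) => [z | all_eq0]; last first.
  by rewrite big1 ?eqxx // in sum_neq0 => z _; apply/eqP/negbFE/all_eq0.
rewrite mulf_eq0 => /norP[Axz_neq0 Bzy_neq0].
by exists z; rewrite !lt0r Axz_neq0 Bzy_neq0 A_ge0 B_ge0.
Qed.

Variables (A : fmx R T) (r : T -> T -> Prop).
Hypotheses (A_ge0 : fmx_nonneg A) (r_refl : forall x, r x x)
  (r_trans : forall x y z, r x y -> r y z -> r x z).

Lemma reaches_rel : (forall x y, 0 < A x y -> r x y) ->
  forall x y, reaches A x y -> r x y.
Proof.
move=> r_step x y [n]; elim: n y => [|n IHn] y /=.
  by rewrite /fmx_id; case: eqP => [<- | _]; rewrite ?ltxx.
move=> /(fmx_mul_gt0 (fmx_pow_nonneg n A_ge0) A_ge0) [z [xz_gt0 zy_gt0]].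
exact: r_trans (IHn z xz_gt0) (r_step z y zy_gt0).
Qed.

Lemma fmx_mul_gt0_rel (C : fmx R T) : fmx_nonneg C ->
  (forall x y, 0 < A x y -> r x y) -> (forall x y, 0 < C x y -> r x y) ->
  forall x y, 0 < fmx_mul A C x y -> r x y.
Proof.
move=> C_ge0 r_stepA r_stepC x y /(fmx_mul_gt0 A_ge0 C_ge0) [z [xz_gt0 zy_gt0]].
exact: r_trans (r_stepA x z xz_gt0) (r_stepC z y zy_gt0).
Qed.

End NonnegativeMatrices.

Section SmallStepChains.
Variables (R : realFieldType) (Pk : finType) (B : fmx R {set Pk}).

Lemma Smat_nonneg : fmx_nonneg B -> fmx_nonneg (Smat B).
Proof. by move=> B_ge0 s t; apply: mulr_ge0; rewrite ?ler0n. Qed.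

Lemma Umat_nonneg : fmx_nonneg (Umat B).
Proof.
by move=> s t; rewrite /Umat; case: excluded_middle_informative => ?; rewrite ler0n.
Qed.

Lemma Smat_gt0_subset (s t : state Pk) : 0 < Smat B s t -> s.2 \subset t.2.
Proof. by rewrite /Smat; case: eqP => [-> _ | _]; rewrite ?subsetUl ?mul0r ?ltxx. Qed.

Lemma Umat_gt0_subset (s t : state Pk) : 0 < Umat B s t -> s.2 \subset t.2.
Proof.
by rewrite /Umat; case: excluded_middle_informative => ?;
   case: eqP => [-> | _]; rewrite ?subxx ?ltxx.
Qed.

End SmallStepChains.

Theorem lemma4p5 (R : realFieldType) (Pk : finType) (B : fmx R {set Pk}) :
  stochastic B ->
  (forall s t : state Pk, reaches (Smat B) s t -> s.2 \subset t.2) /\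
  (forall s t : state Pk, reaches (Umat B) s t -> s.2 \subset t.2) /\
  (forall s t : state Pk,
     reaches (fmx_mul (Smat B) (Umat B)) s t -> s.2 \subset t.2).
Proof.
move=> [B_bounds _].
have S_ge0 : fmx_nonneg (Smat B) by apply: Smat_nonneg => a b; case: (B_bounds a b).
have U_ge0 := @Umat_nonneg _ _ B.
pose r (s t : state Pk) : Prop := s.2 \subset t.2.
have r_refl (s : state Pk) : r s s by exact: subxx.
have r_trans (s t u : state Pk) : r s t -> r t u -> r s u by exact: subset_trans.
have S_step : forall s t, 0 < Smat B s t -> r s t by exact: Smat_gt0_subset.
have U_step : forall s t, 0 < Umat B s t -> r s t by exact: Umat_gt0_subset.
have SU_step := fmx_mul_gt0_rel S_ge0 r_trans U_ge0 S_step U_step.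
split; first exact: (reaches_rel S_ge0 r_refl r_trans S_step).
split; first exact: (reaches_rel U_ge0 r_refl r_trans U_step).
exact: (reaches_rel (fmx_mul_nonneg S_ge0 U_ge0) r_refl r_trans SU_step).
Qed.
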